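(* Let $T>0$, $a,f\in C^1([0,T])$ with $a(t)\ge\alpha>0$ on $[0,T]$. For $0<\varepsilon\le1$ let $u_\varepsilon$ be the solution of $\varepsilon u_\varepsilon'+au_\varepsilon=f$ on $(0,T]$ with initial value $u_\varepsilon(0)$, where $|u_\varepsilon(0)|\le K$ with $K$ independent of $\varepsilon$. For each $N\ge1$ let $0=t_0<t_1<\dots<t_N=T$ be a (possibly non-uniform) mesh $\Omega^N$ with $h_j=t_j-t_{j-1}\le C_0N^{-1}$ for all $1\le j\le N$, where $C_0$ is independent of $N$. Let $U^N_\varepsilon=(U_j)_{j=0}^N$ be the solution of the fitted backward Euler scheme $$\varepsilon\sigma_j\frac{U_j-U_{j-1}}{h_j}+a_jU_j=f(t_j),\quad 1\le j\le N,\qquad U_0=u_\varepsilon(0),$$ where $a_j=a(t_j)$, $\rho_j=h_j/\varepsilon$ and $\sigma_j=\dfrac{a_j\rho_j}{e^{a_j\rho_j}-1}$. Then there is a constant $C$, independent of $\varepsilon$ and $N$, such that for all $N\ge1$ $$\sup_{0<\varepsilon\le1}\ \max_{0\le j\le N}|U_j-u_\varepsilon(t_j)|\le CN^{-1}.$$ *)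

From Stdlib Require Import Reals.
From Coquelicot Require Import Coquelicot.
Open Scope R_scope.

Definition Icc (a b : R) (x : R) : Prop := a <= x <= b.

Definition is_derive_within (D : R -> Prop) (f : R -> R) (x l : R) : Prop :=
  filterlim (fun y => (f y - f x) / (y - x))
    (within (fun y => D y /\ y <> x) (locally x)) (locally l).

Definition continuous_within (D : R -> Prop) (f : R -> R) (x : R) : Prop :=
  filterlim f (within D (locally x)) (locally (f x)).

(* f ∈ C^1([a,b]): differentiable on [a,b] (one-sided at the endpoints)
   with a derivative that is continuous on [a,b]. *)
Definition C1_on (a b : R) (f : R -> R) : Prop :=
  exists df : R -> R,
    (forall x, Icc a b x -> is_derive_within (Icc a b) f x (df x)) /\
    (forall x, Icc a b x -> continuous_within (Icc a b) df x).

(* u solves  eps u' + a u = f  on (0,T], with u continuous at 0 (initial value u(0)). *)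
Definition is_solution (T eps : R) (a f u : R -> R) : Prop :=
  continuous_within (Icc 0 T) u 0 /\
  forall t, 0 < t <= T ->
    exists du, is_derive_within (Icc 0 T) u t du /\ eps * du + a t * u t = f t.

Definition sigma (aj hj eps : R) : R :=
  let r := aj * (hj / eps) in r / (exp r - 1).

Definition is_mesh (T C0 : R) (N : nat) (tN : nat -> R) : Prop :=
  tN 0%nat = 0 /\ tN N = T /\
  forall j, (1 <= j <= N)%nat ->
    tN (j - 1)%nat < tN j /\ tN j - tN (j - 1)%nat <= C0 / INR N.

Definition is_fitted_scheme (eps : R) (a f : R -> R) (N : nat) (tN : nat -> R)
    (u0 : R) (U : nat -> R) : Prop :=
  U 0%nat = u0 /\
  forall j, (1 <= j <= N)%nat ->
    let hj := tN j - tN (j - 1)%nat in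
    eps * sigma (a (tN j)) hj eps * (U j - U (j - 1)%nat) / hj + a (tN j) * U j
      = f (tN j).

(* The key observation is that the fitted scheme is EXACT for frozen
   coefficients: one step from t_{j-1} to t_j computes the value at t_j of the
   solution of  eps w' + a_j w = f(t_j)  started at U_{j-1}
   (lemma [fitted_step_exact]).  The nodal error therefore satisfies
     e_j = E_j e_{j-1} + (local error),   E_j = exp(-a_j h_j / eps) in (0,1],
   and the local error is bounded, by comparison with exponential barriers,
   by  (La ||u|| + Lf) h_j / alpha * (1 - E_j)  ([local_error]).  This convex
   combination keeps the bound  (La ||u|| + Lf) / alpha * C0 / N  invariant
   ([one_step_error]), uniformly in eps. *)

From Pilot Require Import Defs.
From Stdlib Require Import Reals Lra Lia Classical.
From Coquelicot Require Import Coquelicot.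
Open Scope R_scope.

Definition derive_ed (D : R -> Prop) (y : R -> R) (x l : R) : Prop :=
  forall e, 0 < e -> exists d, 0 < d /\ forall z, D z -> z <> x -> Rabs (z - x) < d ->
    Rabs ((y z - y x) / (z - x) - l) < e.

Definition cont_ed (D : R -> Prop) (y : R -> R) (x : R) : Prop :=
  forall e, 0 < e -> exists d, 0 < d /\ forall z, D z -> Rabs (z - x) < d ->
    Rabs (y z - y x) < e.

Lemma filterlim_within_ed (D : R -> Prop) (g : R -> R) x l :
  filterlim g (within D (locally x)) (locally l) ->
  forall e, 0 < e -> exists d, 0 < d /\ forall z, D z -> Rabs (z - x) < d ->
    Rabs (g z - l) < e.
Proof.
  intros H e He.
  assert (Hl : locally l (fun v => Rabs (v - l) < e)).
  { exists (mkposreal e He). intros v Hv. exact Hv. }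
  destruct (H _ Hl) as [d Hd].
  exists d. split; [apply cond_pos|]. intros z Dz Hz. exact (Hd z Hz Dz).
Qed.

Lemma derive_ed_of_within D y x l : is_derive_within D y x l -> derive_ed D y x l.
Proof.
  intros H e He. destruct (filterlim_within_ed _ _ _ _ H e He) as [d [Hd H']].
  exists d; split; [exact Hd|]. intros z Dz Hz Hzd. apply H'; auto.
Qed.

Lemma cont_ed_of_within D y x : continuous_within D y x -> cont_ed D y x.
Proof. intros H e He. exact (filterlim_within_ed _ _ _ _ H e He). Qed.

Lemma derive_ed_subset (D D' : R -> Prop) y x l :
  (forall z, D' z -> D z) -> derive_ed D y x l -> derive_ed D' y x l.
Proof.
  intros HD H e He. destruct (H e He) as [d [Hd H']]. exists d; split; auto.
Qed.

Lemma cont_ed_subset (D D' : R -> Prop) y x :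
  (forall z, D' z -> D z) -> cont_ed D y x -> cont_ed D' y x.
Proof.
  intros HD H e He. destruct (H e He) as [d [Hd H']]. exists d; split; auto.
Qed.

Lemma derive_ed_of_derivable D y x l : derivable_pt_lim y x l -> derive_ed D y x l.
Proof.
  intros H e He. destruct (H e He) as [d Hd]. exists d; split; [apply cond_pos|].
  intros z _ Hz Hzd. replace z with (x + (z - x)) at 1 by ring.
  apply Hd; auto. lra.
Qed.

Lemma derive_ed_minus D y1 y2 x l1 l2 :
  derive_ed D y1 x l1 -> derive_ed D y2 x l2 ->
  derive_ed D (fun z => y1 z - y2 z) x (l1 - l2).
Proof.
  intros H1 H2 e He.
  destruct (H1 (e / 2)) as [d1 [Hd1 H1']]; [lra|].
  destruct (H2 (e / 2)) as [d2 [Hd2 H2']]; [lra|].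
  exists (Rmin d1 d2); split; [apply Rmin_pos; auto|].
  intros z Dz Hz Hzd.
  assert (A1 := H1' z Dz Hz (Rlt_le_trans _ _ _ Hzd (Rmin_l _ _))).
  assert (A2 := H2' z Dz Hz (Rlt_le_trans _ _ _ Hzd (Rmin_r _ _))).
  replace ((y1 z - y2 z - (y1 x - y2 x)) / (z - x) - (l1 - l2)) with
    (((y1 z - y1 x) / (z - x) - l1) - ((y2 z - y2 x) / (z - x) - l2))
    by (field; intro; apply Hz; lra).
  eapply Rle_lt_trans; [apply Rabs_triang|]. rewrite Rabs_Ropp. lra.
Qed.

Lemma cont_ed_minus D y1 y2 x :
  cont_ed D y1 x -> cont_ed D y2 x -> cont_ed D (fun z => y1 z - y2 z) x.
Proof.
  intros H1 H2 e He.
  destruct (H1 (e / 2)) as [d1 [Hd1 H1']]; [lra|].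
  destruct (H2 (e / 2)) as [d2 [Hd2 H2']]; [lra|].
  exists (Rmin d1 d2); split; [apply Rmin_pos; auto|].
  intros z Dz Hzd.
  assert (A1 := H1' z Dz (Rlt_le_trans _ _ _ Hzd (Rmin_l _ _))).
  assert (A2 := H2' z Dz (Rlt_le_trans _ _ _ Hzd (Rmin_r _ _))).
  replace (y1 z - y2 z - (y1 x - y2 x)) with ((y1 z - y1 x) - (y2 z - y2 x)) by ring.
  eapply Rle_lt_trans; [apply Rabs_triang|]. rewrite Rabs_Ropp. lra.
Qed.

Lemma derive_ed_opp D y x l : derive_ed D y x l -> derive_ed D (fun z => - y z) x (- l).
Proof.
  intros H e He. destruct (H e He) as [d [Hd H']]. exists d; split; auto.
  intros z Dz Hz Hzd.
  replace ((- y z - - y x) / (z - x) - - l) with (- ((y z - y x) / (z - x) - l))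
    by (field; intro; apply Hz; lra).
  rewrite Rabs_Ropp. auto.
Qed.

Lemma cont_ed_opp D y x : cont_ed D y x -> cont_ed D (fun z => - y z) x.
Proof.
  intros H e He. destruct (H e He) as [d [Hd H']]. exists d; split; auto.
  intros z Dz Hzd. replace (- y z - - y x) with (- (y z - y x)) by ring.
  rewrite Rabs_Ropp. auto.
Qed.

Lemma cont_ed_of_derive_ed D y x l : derive_ed D y x l -> cont_ed D y x.
Proof.
  intros H e He.
  destruct (H 1 Rlt_0_1) as [d [Hd H']].
  assert (Hp : 0 < Rabs l + 1) by (pose proof (Rabs_pos l); lra).
  exists (Rmin d (e / (Rabs l + 1))); split.
  { apply Rmin_pos; auto. apply Rdiv_lt_0_compat; auto. }
  intros z Dz Hzd.
  destruct (Req_dec z x) as [->|Hz]; [rewrite Rminus_diag, Rabs_R0; auto|].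
  assert (A := H' z Dz Hz (Rlt_le_trans _ _ _ Hzd (Rmin_l _ _))).
  assert (B := Rlt_le_trans _ _ _ Hzd (Rmin_r _ _)).
  set (Q := (y z - y x) / (z - x)) in A.
  assert (E : y z - y x = Q * (z - x)) by (unfold Q; field; intro; apply Hz; lra).
  rewrite E, Rabs_mult.
  assert (HQ : Rabs Q <= Rabs l + 1).
  { replace Q with ((Q - l) + l) by ring. eapply Rle_trans; [apply Rabs_triang|]. lra. }
  apply (Rmult_lt_compat_l (Rabs l + 1)) in B; auto.
  replace ((Rabs l + 1) * (e / (Rabs l + 1))) with e in B by (field; lra).
  pose proof (Rabs_pos (z - x)). nra.
Qed.

Lemma cont_ed_lower_bound D y s c :
  cont_ed D y s ->
  (forall d, 0 < d -> exists z, D z /\ Rabs (z - s) < d /\ c <= y z) -> c <= y s.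
Proof.
  intros Hc Hz. destruct (Rle_dec c (y s)) as [h|h]; auto.
  destruct (Hc (c - y s)) as [d [Hd Hd']]; [lra|].
  destruct (Hz d Hd) as [z [Dz [Hzs Hcz]]].
  specialize (Hd' z Dz Hzs). apply Rabs_def2 in Hd'. lra.
Qed.

Lemma slope_neg_left D y s l :
  derive_ed D y s l -> l < 0 ->
  exists d, 0 < d /\ forall z, D z -> z < s -> s - d < z -> y s < y z.
Proof.
  intros H Hl. destruct (H (- l)) as [d [Hd H']]; [lra|].
  exists d; split; auto. intros z Dz Hzs Hzd.
  assert (Q := H' z Dz ltac:(lra) ltac:(rewrite Rabs_left; lra)).
  apply Rabs_def2 in Q.
  set (Qv := (y z - y s) / (z - s)) in Q.
  assert (y z - y s = Qv * (z - s)) by (unfold Qv; field; lra).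
  nra.
Qed.

(* One-sided maximum principle: a function that starts <= 0 and has a negative
   slope wherever it is positive stays <= 0.  Proof: if y q > 0, the supremum s
   of {x | y x < y q} satisfies y s >= y q > 0, so y is still larger slightly
   left of s, contradicting the choice of s. *)
Lemma barrier_principle p q y :
  p <= q -> cont_ed (Icc p q) y p ->
  (forall x, p < x <= q -> exists l, derive_ed (Icc p q) y x l /\ (0 < y x -> l < 0)) ->
  y p <= 0 -> y q <= 0.
Proof.
  intros Hpq Hcp Hslope Hyp.
  destruct (Rle_dec (y q) 0) as [h|h]; auto. exfalso.
  set (c := y q). assert (Hc : 0 < c) by (unfold c; lra).
  set (S := fun x => p <= x <= q /\ y x < c).
  assert (HSp : S p) by (split; lra).
  assert (HSb : bound S) by (exists q; intros x [Hx _]; lra).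
  destruct (completeness S HSb (ex_intro _ _ HSp)) as [s [Hub Hlub]].
  assert (Hps : p <= s) by (apply Hub; auto).
  assert (Hsq : s <= q) by (apply Hlub; intros x [Hx _]; lra).
  assert (Habove : forall x, s < x <= q -> c <= y x).
  { intros x Hx. destruct (Rle_dec c (y x)) as [h'|h']; auto.
    assert (x <= s) by (apply Hub; split; lra). lra. }
  assert (Hcs : cont_ed (Icc p q) y s).
  { destruct (Req_dec s p) as [->|Hne]; auto.
    destruct (Hslope s) as [l [Hl _]]; [lra|]. exact (cont_ed_of_derive_ed _ _ _ _ Hl). }
  assert (Hys : c <= y s).
  { destruct (Req_dec s q) as [->|Hne]; [unfold c; lra|].
    apply (cont_ed_lower_bound _ _ _ _ Hcs). intros d Hd.
    exists (Rmin q (s + d / 2)).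
    assert (s < Rmin q (s + d / 2)) by (apply Rmin_glb_lt; lra).
    pose proof (Rmin_l q (s + d / 2)). pose proof (Rmin_r q (s + d / 2)).
    split; [split; lra|]. split; [rewrite Rabs_right; lra|]. apply Habove; lra. }
  assert (Hsp : p < s).
  { destruct (Rle_lt_or_eq_dec p s Hps) as [h'|E]; auto. subst s. lra. }
  destruct (Hslope s) as [l [Hl Hneg]]; [lra|].
  destruct (slope_neg_left _ _ _ _ Hl (Hneg ltac:(lra))) as [d [Hd Hleft]].
  assert (s <= s - d); [|lra].
  apply Hlub. intros x [Hx Hyx].
  destruct (Rle_dec x (s - d)) as [h'|h']; auto. exfalso.
  assert (x <= s) by (apply Hub; split; auto).
  destruct (Req_dec x s) as [->|Hxs]; [lra|].
  assert (y s < y x) by (apply Hleft; [split|..]; lra). lra.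
Qed.

Lemma not_upper_bound_witness (E : R -> Prop) b :
  ~ is_upper_bound E b -> exists w, E w /\ b < w.
Proof.
  intros H. apply NNPP. intro H'. apply H. intros w Ew.
  destruct (Rle_dec w b) as [h|h]; auto. exfalso; apply H'. exists w. split; auto. lra.
Qed.

(* A function continuous on [p,q] is bounded there: the supremum of the points
   up to which g is bounded cannot lie below q. *)
Lemma cont_ed_bounded p q g :
  p <= q -> (forall x, p <= x <= q -> cont_ed (Icc p q) g x) ->
  exists M, forall x, p <= x <= q -> Rabs (g x) <= M.
Proof.
  intros Hpq Hc.
  set (E := fun x => p <= x <= q /\ exists M, forall z, p <= z <= x -> Rabs (g z) <= M).
  assert (Ep : E p).
  { split; [lra|]. exists (Rabs (g p)). intros z Hz. replace z with p by lra. lra. }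
  assert (Hb : bound E) by (exists q; intros w [Hw _]; lra).
  destruct (completeness E Hb (ex_intro _ _ Ep)) as [m [Hub Hlub]].
  assert (Hpm : p <= m) by (apply Hub; auto).
  assert (Hmq : m <= q) by (apply Hlub; intros w [Hw _]; lra).
  destruct (Hc m (conj Hpm Hmq) 1 Rlt_0_1) as [d [Hd Hnear]].
  destruct (not_upper_bound_witness E (m - d)) as [x0 [[Hx0 [M0 HM0]] Hx0m]].
  { intro Hu. specialize (Hlub _ Hu). lra. }
  set (x1 := Rmin q (m + d / 2)).
  assert (Hx1 : x1 <= m + d / 2) by apply Rmin_r.
  assert (Hx1q : x1 <= q) by apply Rmin_l.
  set (M1 := Rmax M0 (Rabs (g m) + 1)).
  assert (Hbound : forall z, p <= z <= x1 -> Rabs (g z) <= M1).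
  { intros z Hz. destruct (Rle_dec z x0) as [h|h].
    - eapply Rle_trans; [apply HM0; lra|]. apply Rmax_l.
    - eapply Rle_trans; [|apply Rmax_r].
      assert (Rabs (g z - g m) < 1) by (apply Hnear; [split; lra | apply Rabs_def1; lra]).
      assert (Rabs (g z) <= Rabs (g z - g m) + Rabs (g m)).
      { replace (g z) with ((g z - g m) + g m) at 1 by ring. apply Rabs_triang. }
      lra. }
  destruct (Rle_dec q (m + d / 2)) as [h|h].
  - exists M1. intros x Hx. apply Hbound. unfold x1. rewrite Rmin_left; lra.
  - exfalso. assert (Ex1 : E x1).
    { split; [split; [unfold x1; apply Rmin_glb; lra | exact Hx1q]|]. exists M1. exact Hbound. }
    assert (Hx := Hub _ Ex1). unfold x1 in Hx. rewrite Rmin_right in Hx; lra.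
Qed.

Lemma increment_bound p q h dh L :
  p <= q ->
  (forall x, p <= x <= q -> derive_ed (Icc p q) h x (dh x)) ->
  (forall x, p <= x <= q -> dh x < L) -> h q - h p <= L * (q - p).
Proof.
  intros Hpq HD Hl.
  set (lin := fun z => h p + L * (z - p)).
  assert (Dlin : forall x, derivable_pt_lim lin x L).
  { intros x. apply is_derive_Reals. unfold lin. auto_derive; auto. ring. }
  enough (h q - lin q <= 0) by (unfold lin in *; lra).
  apply (barrier_principle p q (fun z => h z - lin z) Hpq).
  - apply cont_ed_minus.
    + apply (cont_ed_of_derive_ed _ _ _ (dh p)), HD; lra.
    + apply (cont_ed_of_derive_ed _ _ _ L), derive_ed_of_derivable, Dlin.
  - intros x Hx. exists (dh x - L). split.
    + apply derive_ed_minus; [apply HD; lra | apply derive_ed_of_derivable, Dlin].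
    + intros _. specialize (Hl x ltac:(lra)). lra.
  - unfold lin. lra.
Qed.

Lemma C1_lipschitz T g : 0 < T -> C1_on 0 T g ->
  exists L, 0 <= L /\ forall x y, 0 <= x <= T -> 0 <= y <= T ->
    Rabs (g x - g y) <= L * Rabs (x - y).
Proof.
  intros HT [dg [Hd Hc]].
  destruct (cont_ed_bounded 0 T dg) as [B HB]; [lra| intros x Hx; apply cont_ed_of_within, Hc, Hx |].
  set (L := Rabs B + 1). exists L. split; [pose proof (Rabs_pos B); unfold L; lra|].
  assert (HdL : forall x, 0 <= x <= T -> Rabs (dg x) < L).
  { intros x Hx. specialize (HB x Hx). pose proof (Rle_abs B). unfold L; lra. }
  assert (Hinc : forall p q, 0 <= p <= q -> q <= T -> Rabs (g q - g p) <= L * (q - p)).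
  { intros p q Hp Hq.
    assert (sub : forall z, Icc p q z -> Icc 0 T z) by (intros z [? ?]; split; lra).
    assert (Dg : forall x, p <= x <= q -> derive_ed (Icc p q) g x (dg x)).
    { intros x Hx. apply (derive_ed_subset _ _ _ _ _ sub), derive_ed_of_within, Hd. split; lra. }
    assert (Hup := increment_bound p q g dg L ltac:(lra) Dg).
    assert (Hdown := increment_bound p q (fun z => - g z) (fun x => - dg x) L ltac:(lra)).
    apply Rabs_le. split.
    - enough (- g q - - g p <= L * (q - p)) by lra.
      apply Hdown; [intros x Hx; apply derive_ed_opp, Dg, Hx|].
      intros x Hx. pose proof (HdL x ltac:(lra)). pose proof (Rle_abs (- dg x)).
      rewrite Rabs_Ropp in *. lra.
    - apply Hup. intros x Hx. pose proof (HdL x ltac:(lra)). pose proof (Rle_abs (dg x)). lra. }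
  intros x y Hx Hy. destruct (Rle_dec x y) as [h|h].
  - rewrite (Rabs_minus_sym (g x)), (Rabs_minus_sym x), (Rabs_right (y - x)) by lra.
    apply Hinc; lra.
  - rewrite (Rabs_right (x - y)) by lra. apply Hinc; lra.
Qed.

Lemma lipschitz_sup_bound T g L : 0 <= L ->
  (forall x y, 0 <= x <= T -> 0 <= y <= T -> Rabs (g x - g y) <= L * Rabs (x - y)) ->
  forall x, 0 <= x <= T -> Rabs (g x) <= Rabs (g 0) + L * T.
Proof.
  intros HL0 HL x Hx. specialize (HL x 0 Hx ltac:(lra)).
  rewrite Rminus_0_r, (Rabs_right x) in HL by lra.
  assert (Rabs (g x) <= Rabs (g x - g 0) + Rabs (g 0)).
  { replace (g x) with ((g x - g 0) + g 0) at 1 by ring. apply Rabs_triang. }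
  assert (L * x <= L * T) by (apply Rmult_le_compat_l; lra).
  lra.
Qed.

Definition solves_ed (T eps : R) (a f u : R -> R) : Prop :=
  (forall x, 0 <= x <= T -> cont_ed (Icc 0 T) u x) /\
  (forall x, 0 < x <= T ->
     exists du, derive_ed (Icc 0 T) u x du /\ eps * du + a x * u x = f x).

Lemma solves_ed_of_solution T eps a f u : is_solution T eps a f u -> solves_ed T eps a f u.
Proof.
  intros [H0 Hd]. split.
  - intros x Hx. destruct (Req_dec x 0) as [->|Hne]; [apply cont_ed_of_within, H0|].
    destruct (Hd x ltac:(lra)) as [du [Hdu _]].
    apply (cont_ed_of_derive_ed _ _ _ du), derive_ed_of_within, Hdu.
  - intros x Hx. destruct (Hd x Hx) as [du [H1 H2]]. exists du.
    split; [apply derive_ed_of_within, H1 | exact H2].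
Qed.

Lemma solves_ed_opp T eps a f u :
  solves_ed T eps a f u -> solves_ed T eps a (fun x => - f x) (fun x => - u x).
Proof.
  intros [Hc Hd]. split.
  - intros x Hx. apply cont_ed_opp, Hc, Hx.
  - intros x Hx. destruct (Hd x Hx) as [du [Hdu Heq]].
    exists (- du). split; [apply derive_ed_opp, Hdu | rewrite <- Heq; ring].
Qed.

Lemma comparison T eps a f u v dv p q :
  0 < eps -> 0 <= p -> p <= q -> q <= T -> solves_ed T eps a f u ->
  (forall x, derivable_pt_lim v x (dv x)) ->
  (forall x, p < x <= q -> v x < u x -> f x - a x * u x < eps * dv x) ->
  u p <= v p -> u q <= v q.
Proof.
  intros He Hp Hpq HqT [Hc Hd] Hv Hsuper Hpv.
  assert (sub : forall z, Icc p q z -> Icc 0 T z) by (intros z [? ?]; split; lra).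
  enough (u q - v q <= 0) by lra.
  apply (barrier_principle p q (fun z => u z - v z) Hpq).
  - apply cont_ed_minus.
    + apply (cont_ed_subset _ _ _ _ sub), Hc; lra.
    + apply (cont_ed_of_derive_ed _ _ _ (dv p)), derive_ed_of_derivable, Hv.
  - intros x Hx. destruct (Hd x ltac:(lra)) as [du [Hdu Heq]].
    exists (du - dv x). split.
    + apply derive_ed_minus; [apply (derive_ed_subset _ _ _ _ _ sub), Hdu|].
      apply derive_ed_of_derivable, Hv.
    + intros Hpos. specialize (Hsuper x Hx ltac:(lra)).
      assert (eps * (du - dv x) < 0) by (rewrite Rmult_minus_distr_l; lra). nra.
  - lra.
Qed.

Lemma solution_upper T eps a f u alpha M t :
  0 < eps -> 0 < alpha -> 0 <= M -> 0 <= t <= T ->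
  (forall x, 0 <= x <= T -> alpha <= a x) ->
  (forall x, 0 <= x <= T -> f x <= alpha * M) ->
  solves_ed T eps a f u -> u 0 <= M -> u t <= M.
Proof.
  intros He Ha HM Ht Hab Hf Hs H0.
  apply (comparison T eps a f u (fun _ => M) (fun _ => 0) 0 t); auto; try lra.
  - intros x. apply derivable_pt_lim_const.
  - intros x Hx Hlt. pose proof (Hab x ltac:(lra)). pose proof (Hf x ltac:(lra)). nra.
Qed.

Lemma solution_bounded T eps a f u alpha F K :
  0 < eps -> 0 < alpha -> (forall x, 0 <= x <= T -> alpha <= a x) ->
  (forall x, 0 <= x <= T -> Rabs (f x) <= F) -> Rabs (u 0) <= K ->
  solves_ed T eps a f u ->
  forall t, 0 <= t <= T -> Rabs (u t) <= Rmax K (F / alpha).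
Proof.
  intros He Ha Hab HF HK Hs t Ht.
  set (M := Rmax K (F / alpha)).
  assert (HKM : K <= M) by apply Rmax_l.
  assert (HFM : F <= alpha * M).
  { assert (F / alpha <= M) by apply Rmax_r.
    replace F with (alpha * (F / alpha)) by (field; lra). apply Rmult_le_compat_l; lra. }
  assert (HM0 : 0 <= M) by (pose proof (Rabs_pos (u 0)); lra).
  assert (Hf : forall x, 0 <= x <= T -> - (alpha * M) <= f x <= alpha * M).
  { intros x Hx. specialize (HF x Hx). apply Rabs_le_between in HF. lra. }
  apply Rabs_le_between in HK.
  apply Rabs_le. split.
  - enough (- u t <= M) by lra.
    apply (solution_upper T eps a (fun x => - f x) (fun x => - u x) alpha M t); auto;
      [intros x Hx; specialize (Hf x Hx); lra | apply solves_ed_opp, Hs | lra].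
  - apply (solution_upper T eps a f u alpha M t); auto;
      [intros x Hx; specialize (Hf x Hx); lra | lra].
Qed.

(* Value at time p + h of the solution of the frozen-coefficient problem
   eps w' + aj w = fj with w(p) = y. *)
Definition frozen_step (eps aj fj h y : R) : R :=
  fj / aj + (y - fj / aj) * exp (- (aj / eps) * h).

Lemma decay_bounds eps aj h :
  0 < eps -> 0 < aj -> 0 <= h -> 0 < exp (- (aj / eps) * h) <= 1.
Proof.
  intros He Ha Hh. split; [apply exp_pos|]. rewrite <- exp_0.
  assert (Hr : 0 <= aj / eps * h) by (apply Rmult_le_pos; [apply Rlt_le, Rdiv_lt_0_compat|]; lra).
  destruct (Rle_lt_or_eq_dec 0 (aj / eps * h) Hr) as [h'|h'].
  - left. apply exp_increasing. lra.
  - right. f_equal. lra.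
Qed.

Lemma frozen_step_opp eps aj fj h y :
  0 < aj -> frozen_step eps aj (- fj) h (- y) = - frozen_step eps aj fj h y.
Proof. intros Ha. unfold frozen_step. field. lra. Qed.

Lemma frozen_step_diff eps aj fj h y z :
  frozen_step eps aj fj h y - frozen_step eps aj fj h z = exp (- (aj / eps) * h) * (y - z).
Proof. unfold frozen_step. ring. Qed.

(* One-sided local error: comparison of u with the exponential barrier
   v(z) = A + (u p - A) exp(-aj (z - p) / eps),  A = (fj + Rb) / aj,
   which is a supersolution when the coefficient-freezing residual is <= Rb. *)
Lemma local_error_upper T eps a f u aj fj p q Rb :
  0 < eps -> 0 < aj -> 0 <= p -> p <= q -> q <= T -> solves_ed T eps a f u ->
  (forall x, p < x <= q -> (f x - fj) + (aj - a x) * u x <= Rb) ->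
  u q - frozen_step eps aj fj (q - p) (u p) <= Rb / aj * (1 - exp (- (aj / eps) * (q - p))).
Proof.
  intros He Haj Hp Hpq HqT Hs Hres.
  set (k := aj / eps).
  set (A := fj / aj + Rb / aj).
  set (v := fun z => A + (u p - A) * exp (- k * (z - p))).
  assert (Hv : forall x, derivable_pt_lim v x ((u p - A) * exp (- k * (x - p)) * (- k))).
  { intros x. apply is_derive_Reals. unfold v. auto_derive; auto. unfold Rminus. ring. }
  assert (Hcmp : u q <= v q).
  { apply (comparison T eps a f u v (fun x => (u p - A) * exp (- k * (x - p)) * (- k)) p q); auto.
    - intros x Hx Hlt. specialize (Hres x Hx).
      assert (eps * ((u p - A) * exp (- k * (x - p)) * - k) = fj + Rb - aj * v x)
        by (unfold v, A, k; field; lra).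
      assert (aj * v x < aj * u x) by (apply Rmult_lt_compat_l; lra).
      lra.
    - unfold v. rewrite Rminus_diag, Rmult_0_r, exp_0. lra. }
  assert (Hvq : v q = frozen_step eps aj fj (q - p) (u p)
                      + Rb / aj * (1 - exp (- k * (q - p)))).
  { unfold v, A, k, frozen_step. ring. }
  lra.
Qed.

Lemma local_error T eps a f u aj fj p q Rb :
  0 < eps -> 0 < aj -> 0 <= p -> p <= q -> q <= T -> solves_ed T eps a f u ->
  (forall x, p < x <= q -> Rabs (f x - fj) + Rabs (aj - a x) * Rabs (u x) <= Rb) ->
  Rabs (u q - frozen_step eps aj fj (q - p) (u p))
    <= Rb / aj * (1 - exp (- (aj / eps) * (q - p))).
Proof.
  intros He Haj Hp Hpq HqT Hs Hres.
  assert (Hres' : forall x, p < x <= q -> - Rb <= (f x - fj) + (aj - a x) * u x <= Rb).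
  { intros x Hx. apply Rabs_le_between.
    eapply Rle_trans; [apply Rabs_triang|]. rewrite Rabs_mult. auto. }
  apply Rabs_le. split.
  - assert (Hlow : - u q - frozen_step eps aj (- fj) (q - p) (- u p)
                    <= Rb / aj * (1 - exp (- (aj / eps) * (q - p)))).
    { apply (local_error_upper T eps a (fun x => - f x) (fun x => - u x)); auto.
      - apply solves_ed_opp, Hs.
      - intros x Hx. specialize (Hres' x Hx). lra. }
    rewrite frozen_step_opp in Hlow by exact Haj. lra.
  - apply (local_error_upper T eps a f u); auto. intros x Hx. apply Hres'; exact Hx.
Qed.

Lemma fitted_step_exact eps aj hj fj X Y :
  0 < eps -> 0 < aj -> 0 < hj ->
  eps * Defs.sigma aj hj eps * (X - Y) / hj + aj * X = fj ->
  X = frozen_step eps aj fj hj Y.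
Proof.
  intros He Ha Hh H. unfold Defs.sigma in H. cbv zeta in H. unfold frozen_step.
  set (r := aj * (hj / eps)) in H.
  assert (Hr : 0 < r) by (apply Rmult_lt_0_compat; [|apply Rdiv_lt_0_compat]; lra).
  set (E := exp r) in H.
  assert (HE : 1 < E) by (unfold E; rewrite <- exp_0; apply exp_increasing; auto).
  replace (- (aj / eps) * hj) with (- r) by (unfold r; field; lra).
  rewrite exp_Ropp. fold E.
  replace (eps * (r / (E - 1)) * (X - Y) / hj) with (aj * (X - Y) / (E - 1)) in H
    by (unfold r; field; repeat split; lra).
  assert (H' : aj * (X - Y) + aj * X * (E - 1) = fj * (E - 1)) by (rewrite <- H; field; lra).
  apply (Rmult_eq_reg_l (aj * E)); [|nra].
  replace (aj * E * (fj / aj + (Y - fj / aj) * / E)) with (aj * Y + (E - 1) * fj)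
    by (field; lra).
  nra.
Qed.

Lemma mesh_nodes_in T C0 N tN :
  is_mesh T C0 N tN -> forall j, (j <= N)%nat -> 0 <= tN j <= T.
Proof.
  intros [Ht0 [HtN Hm]].
  assert (Hlow : forall j, (j <= N)%nat -> 0 <= tN j).
  { induction j as [|j IH]; intros Hj; [lra|].
    destruct (Hm (S j) ltac:(lia)) as [Hlt _]. replace (S j - 1)%nat with j in Hlt by lia.
    specialize (IH ltac:(lia)). lra. }
  assert (Hup : forall k, (k <= N)%nat -> tN (N - k)%nat <= T).
  { induction k as [|k IH]; intros Hk; [rewrite Nat.sub_0_r; lra|].
    destruct (Hm (N - k)%nat ltac:(lia)) as [Hlt _].
    replace (N - k - 1)%nat with (N - S k)%nat in Hlt by lia.
    specialize (IH ltac:(lia)). lra. }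
  intros j Hj. split; [apply Hlow, Hj|].
  replace j with (N - (N - j))%nat by lia. apply Hup. lia.
Qed.

Section NodalError.

Variables (T eps alpha M La Lf : R) (a f u : R -> R).
Hypothesis Heps : 0 < eps.
Hypothesis Halpha : 0 < alpha.
Hypothesis Hab : forall x, 0 <= x <= T -> alpha <= a x.
Hypothesis Hsol : solves_ed T eps a f u.
Hypothesis HuM : forall x, 0 <= x <= T -> Rabs (u x) <= M.
Hypothesis HLa0 : 0 <= La.
Hypothesis HLf0 : 0 <= Lf.
Hypothesis HLa : forall x y, 0 <= x <= T -> 0 <= y <= T -> Rabs (a x - a y) <= La * Rabs (x - y).
Hypothesis HLf : forall x y, 0 <= x <= T -> 0 <= y <= T -> Rabs (f x - f y) <= Lf * Rabs (x - y).

Lemma freezing_residual p q x :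
  0 <= p -> p < x <= q -> q <= T ->
  Rabs (f x - f q) + Rabs (a q - a x) * Rabs (u x) <= (La * M + Lf) * (q - p).
Proof.
  intros Hp Hx HqT.
  assert (Hf := HLf x q ltac:(lra) ltac:(lra)).
  assert (Ha := HLa q x ltac:(lra) ltac:(lra)).
  assert (Hu := HuM x ltac:(lra)).
  rewrite (Rabs_minus_sym x q), (Rabs_right (q - x)) in Hf by lra.
  rewrite (Rabs_right (q - x)) in Ha by lra.
  assert (Rabs (a q - a x) * Rabs (u x) <= La * (q - p) * M).
  { apply Rmult_le_compat; [apply Rabs_pos | apply Rabs_pos | | exact Hu].
    eapply Rle_trans; [exact Ha|]. apply Rmult_le_compat_l; lra. }
  nra.
Qed.

(* The error bound B = (La M + Lf)/alpha * H is preserved by a step of length <= H: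
   the new error is E * (old error) plus a local error <= (1 - E) * B. *)
Lemma one_step_error p q X Y B :
  0 <= p < q -> q <= T -> (La * M + Lf) / alpha * (q - p) <= B ->
  eps * Defs.sigma (a q) (q - p) eps * (X - Y) / (q - p) + a q * X = f q ->
  Rabs (Y - u p) <= B -> Rabs (X - u q) <= B.
Proof.
  intros Hp HqT HB Hscheme HY.
  assert (Haq : alpha <= a q) by (apply Hab; lra).
  assert (HM0 : 0 <= M) by (pose proof (Rabs_pos (u q)); pose proof (HuM q ltac:(lra)); lra).
  rewrite (fitted_step_exact eps (a q) (q - p) (f q) X Y) by (auto; lra).
  set (E := exp (- (a q / eps) * (q - p))).
  assert (HE : 0 < E <= 1) by (apply decay_bounds; lra).
  assert (Hloc := local_error T eps a f u (a q) (f q) p q ((La * M + Lf) * (q - p))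
    Heps ltac:(lra) ltac:(lra) ltac:(lra) HqT Hsol
    (fun x Hx => freezing_residual p q x ltac:(lra) Hx HqT)).
  fold E in Hloc.
  assert (Hrb : (La * M + Lf) * (q - p) / a q <= B).
  { eapply Rle_trans; [|exact HB].
    replace ((La * M + Lf) / alpha * (q - p)) with ((La * M + Lf) * (q - p) / alpha)
      by (field; lra).
    apply Rmult_le_compat_l; [apply Rmult_le_pos; nra|].
    apply Rinv_le_contravar; lra. }
  replace (frozen_step eps (a q) (f q) (q - p) Y - u q) with
    ((frozen_step eps (a q) (f q) (q - p) Y - frozen_step eps (a q) (f q) (q - p) (u p))
     - (u q - frozen_step eps (a q) (f q) (q - p) (u p))) by ring.
  rewrite frozen_step_diff. fold E.
  eapply Rle_trans; [apply Rabs_triang|].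
  rewrite Rabs_Ropp, Rabs_mult, (Rabs_right E) by lra.
  assert (E * Rabs (Y - u p) <= E * B) by (apply Rmult_le_compat_l; lra).
  assert ((La * M + Lf) * (q - p) / a q * (1 - E) <= B * (1 - E))
    by (apply Rmult_le_compat_r; lra).
  lra.
Qed.

Lemma nodal_error C0 N tN U :
  (1 <= N)%nat -> is_mesh T C0 N tN -> is_fitted_scheme eps a f N tN (u 0) U ->
  forall j, (j <= N)%nat -> Rabs (U j - u (tN j)) <= (La * M + Lf) / alpha * C0 / INR N.
Proof.
  intros HN Hmesh [HU0 HUj].
  assert (Hin := mesh_nodes_in T C0 N tN Hmesh).
  destruct Hmesh as [Ht0 [_ Hm]].
  assert (HNpos : 0 < INR N) by (apply lt_0_INR; lia).
  set (c := (La * M + Lf) / alpha).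
  assert (HM0 : 0 <= M).
  { pose proof (Rabs_pos (u (tN 0%nat))). pose proof (HuM _ (Hin 0%nat ltac:(lia))). lra. }
  assert (Hc : 0 <= c) by (apply Rdiv_le_0_compat; nra).
  assert (HH : 0 <= C0 / INR N) by (destruct (Hm 1%nat ltac:(lia)) as [A B]; lra).
  replace (c * C0 / INR N) with (c * (C0 / INR N)) by (field; lra).
  induction j as [|j IH]; intros Hj.
  - rewrite HU0, Ht0, Rminus_diag, Rabs_R0. apply Rmult_le_pos; lra.
  - destruct (Hm (S j) ltac:(lia)) as [Hlt Hh]. specialize (HUj (S j) ltac:(lia)).
    cbv zeta in HUj. replace (S j - 1)%nat with j in Hlt, Hh, HUj by lia.
    apply (one_step_error (tN j) (tN (S j)) (U (S j)) (U j)); auto.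
    + split; [apply Hin; lia | exact Hlt].
    + apply Hin; lia.
    + apply Rmult_le_compat_l; lra.
    + apply IH; lia.
Qed.

End NodalError.

Theorem theorem1
  (T alpha K C0 : R) (a f : R -> R) (u : R -> R -> R) (t : nat -> nat -> R)
  (hT : 0 < T)
  (ha : C1_on 0 T a) (hf : C1_on 0 T f)
  (halpha : 0 < alpha) (hab : forall x, 0 <= x <= T -> alpha <= a x)
  (hu : forall eps, 0 < eps <= 1 -> is_solution T eps a f (u eps))
  (hK : forall eps, 0 < eps <= 1 -> Rabs (u eps 0) <= K)
  (hmesh : forall N, (1 <= N)%nat -> is_mesh T C0 N (t N)) :
  exists C : R,
    forall (N : nat), (1 <= N)%nat ->
    forall eps, 0 < eps <= 1 ->
    forall U : nat -> R, is_fitted_scheme eps a f N (t N) (u eps 0) U ->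
    forall j, (j <= N)%nat ->
      Rabs (U j - u eps (t N j)) <= C / INR N.
Proof.
  destruct (C1_lipschitz T a hT ha) as [La [HLa0 HLa]].
  destruct (C1_lipschitz T f hT hf) as [Lf [HLf0 HLf]].
  set (F := Rabs (f 0) + Lf * T).
  set (M := Rmax K (F / alpha)).
  exists ((La * M + Lf) / alpha * C0).
  intros N HN eps Heps U HU j Hj.
  assert (Hs := solves_ed_of_solution _ _ _ _ _ (hu eps Heps)).
  apply (nodal_error T eps alpha M La Lf a f (u eps)); auto; [lra|].
  (* the maximum principle provides the bound M, as |f| <= F on [0,T] *)
  apply (solution_bounded T eps a f (u eps) alpha F K); auto.
  - lra.
  - exact (lipschitz_sup_bound T f Lf HLf0 HLf).
Qed.
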